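(* Let $a\in(0,\frac23]$, $f\in U_+$ and $x\in[0,\frac1{1-a}]$. Under $\mathbb P_x$, the sequence $\big(f(X_n)\mathbb 1\{\tau>n\}\big)_{n\ge0}$ is a time-homogeneous non-negative Markov chain, and $\tau=\inf\{n\ge1:f(X_n)=0\}$. If $\varkappa'_a<\infty$, this chain has $\varkappa'_a+2$ states, including the absorbing state $0$.
   Context: Let $p\in(0,1)$, $q=1-p$, and let $\xi_1,\xi_2,\dots$ be i.i.d. with $\mathbb P(\xi_1=1)=p$, $\mathbb P(\xi_1=-1)=q$. The chain is $X_{n+1}=aX_n+\xi_{n+1}$, $X_0=x$ under $\mathbb P_x$, and $\tau=\inf\{n\ge0:X_n<0\}$. For $a\in(0,1)$ define $T_a(x)=\frac1a(x+1)$ if $0\le x<1$ and $x\le\frac{2a-1}{1-a}$, and $T_a(x)=\frac1a(x-1)$ if $1\le x\le\frac1{1-a}$. Let $I_a=\big(\frac{2a-1}{1-a},1\big)$, $\varkappa_a=\inf\{k\ge0:T_a^k(0)\in I_a\}$ ($\inf\emptyset=\infty$), and $\varkappa'_a=\#\{T_a^k(0):0\le k<\varkappa_a+1\}-1$ (the number of distinct points of the orbit of $0$ minus one). Let $U_+$ be the set of functions $f:\mathbb R\to\mathbb R$ of the form $f(x)=\sum_{k=0}^{\varkappa_a}u_k\mathbb 1\{x\ge T_a^k(0)\}$ with all $u_k>0$ and $\sum_k u_k<\infty$. *)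

From Stdlib Require Import Reals Lra List ClassicalEpsilon.
From Coquelicot Require Import Coquelicot.
Import ListNotations.
Open Scope R_scope.

(* T_a as in the paper on its domain
   {0 <= x < 1, x <= (2a-1)/(1-a)} U [1, 1/(1-a)].
   Outside the domain the value is irrelevant: the orbit of 0 is only used
   up to (and including) the first time it enters I_a, and before that time
   it stays in [0, 1/(1-a)] \ I_a, which is the domain of T_a. *)
Definition T_a (a x : R) : R :=
  if excluded_middle_informative (0 <= x < 1 /\ x <= (2*a - 1)/(1 - a))
  then (x + 1) / a
  else (x - 1) / a.

Definition in_I (a y : R) : Prop := (2*a - 1)/(1 - a) < y < 1.

Definition orb (a : R) (k : nat) : R := Nat.iter k (T_a a) 0.

(* k <= varkappa_a  (varkappa_a = inf{k >= 0 : T_a^k(0) \in I_a}, possibly oo) *)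
Definition le_kappa (a : R) (k : nat) : Prop :=
  forall j, (j < k)%nat -> ~ in_I a (orb a j).

Definition orbit_set (a : R) (y : R) : Prop :=
  exists k, le_kappa a k /\ y = orb a k.

(* varkappa'_a = m (in particular varkappa'_a < oo): the orbit set has
   exactly m+1 distinct points. *)
Definition kappa'_eq (a : R) (m : nat) : Prop :=
  exists l : list R, NoDup l /\ length l = (m + 1)%nat /\
    forall y, In y l <-> orbit_set a y.

(* f(x) = sum_{k=0}^{varkappa_a} u_k 1{x >= T_a^k(0)}, u_k > 0, sum u_k < oo.
   (u is given on all of nat; only the u_k with k <= varkappa_a enter f.) *)
Definition in_Uplus (a : R) (f : R -> R) : Prop :=
  exists u : nat -> R,
    (forall k, 0 < u k) /\ ex_series u /\
    forall x, is_series
      (fun k => if excluded_middle_informative (le_kappa a k)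
                then (if excluded_middle_informative (orb a k <= x)
                      then u k else 0)
                else 0) (f x).

(* A sign path: xi k = true means xi_{k+1} = +1, false means xi_{k+1} = -1. *)
Definition sgn (b : bool) : R := if b then 1 else -1.

Fixpoint X (a x : R) (xi : nat -> bool) (n : nat) : R :=
  match n with
  | O => x
  | S k => a * X a x xi k + sgn (xi k)
  end.

(* tau > n, where tau = inf{n >= 0 : X_n < 0} *)
Definition tau_gt (a x : R) (xi : nat -> bool) (n : nat) : Prop :=
  forall k, (k <= n)%nat -> 0 <= X a x xi k.

Definition Y (a : R) (f : R -> R) (x : R) (xi : nat -> bool) (n : nat) : R :=
  if excluded_middle_informative (tau_gt a x xi n) then f (X a x xi n) else 0.

Fixpoint all_lists (n : nat) : list (list bool) :=
  match n with
  | O => (@nil bool) :: nil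
  | S k => flat_map (fun l => [true :: l; false :: l]) (all_lists k)
  end.

(* P(xi_1..xi_n = l) with P(xi = 1) = p, P(xi = -1) = q = 1 - p *)
Definition weight (p : R) (l : list bool) : R :=
  List.fold_right (fun (b : bool) (acc : R) => (if b then p else 1 - p) * acc) 1 l.

Definition xi_of (l : list bool) (k : nat) : bool := nth k l false.

(* P_x(Y_0 = s 0, ..., Y_n = s n); Y_0..Y_n depend only on xi_1..xi_n. *)
Definition hist_prob (p a : R) (f : R -> R) (x : R) (n : nat) (s : nat -> R) : R :=
  List.fold_right Rplus 0
    (map (fun l => weight p l *
            (if excluded_middle_informative
                  (forall k, (k <= n)%nat -> Y a f x (xi_of l) k = s k)
             then 1 else 0))
         (all_lists n)).

Definition is_hom_markov (p a : R) (f : R -> R) (x : R) : Prop :=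
  exists K : R -> R -> R,
    (forall s t, 0 <= K s t) /\
    forall (n : nat) (s : nat -> R),
      hist_prob p a f x (S n) s = hist_prob p a f x n s * K (s n) (s (S n)).

Definition state (a : R) (f : R -> R) (v : R) : Prop :=
  v = 0 \/ exists y, 0 <= y <= 1 / (1 - a) /\ v = f y.

(* f is a nondecreasing step function whose jumps sit exactly at the points of
   the orbit of 0 under T_a, up to its entry into I_a.  If 0 <= x <= y <= 1/(1-a)
   and f x = f y, i.e. no jump lies in (x, y], then no jump lies in
   (a x + 1, a y + 1] or (a x - 1, a y - 1] either, because T_a would send it
   to a later orbit point in (x, y].  Hence f(X_n) determines the law of
   f(X_(n+1)): the chain stopped at tau is lumpable through f, which gives the
   Markov property, and its states are 0 and the values of f on the orbit.
   For a = 2/3 the argument needs that the orbit never hits 1, which holds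
   because its points are of the form 3 m / 2^k. *)

From Stdlib Require Import Reals List Lra Lia ClassicalEpsilon ZArith Znumtheory.
From Coquelicot Require Import Coquelicot.
Import ListNotations.
Open Scope R_scope.

Lemma one_minus_inv_spec (a : R) : a < 1 -> (1 - a) * (1/(1 - a)) = 1 /\ 0 < 1/(1 - a).
Proof. intros; split; [field|apply Rdiv_lt_0_compat]; lra. Qed.

Lemma is_series_ge_term (c : nat -> R) (l : R) :
  (forall k, 0 <= c k) -> is_series c l -> forall k, c k <= l.
Proof.
  intros c_ge0 Hc k.
  assert (sum_ge0 : forall n, 0 <= sum_n c n).
  { induction n; [rewrite sum_O; apply c_ge0|].
    rewrite sum_Sn; unfold plus; simpl; specialize (c_ge0 (S n)); lra. }
  assert (sum_le : forall n, sum_n c n <= l).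
  { apply is_lim_seq_incr_compare; [exact Hc|].
    intros n; rewrite sum_Sn; unfold plus; simpl; specialize (c_ge0 (S n)); lra. }
  destruct k as [|k]; [rewrite <- (sum_O c); apply sum_le|].
  specialize (sum_le (S k)); specialize (sum_ge0 k).
  rewrite sum_Sn in sum_le; unfold plus in sum_le; simpl in sum_le; lra.
Qed.

Definition step_term (P : nat -> Prop) (t u : nat -> R) (x : R) (k : nat) : R :=
  if excluded_middle_informative (P k) then
    if excluded_middle_informative (t k <= x) then u k else 0
  else 0.

Section StepFunction.

Variables (P : nat -> Prop) (t u : nat -> R) (f : R -> R).
Hypothesis u_pos : forall k, 0 < u k.
Hypothesis f_series : forall x, is_series (step_term P t u x) (f x).

Lemma step_term_ge0 x k : 0 <= step_term P t u x k.
Proof.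
  unfold step_term; repeat destruct excluded_middle_informative; try lra.
  now apply Rlt_le.
Qed.

Lemma step_ge_jump x k : P k -> t k <= x -> u k <= f x.
Proof.
  intros Pk tk_le.
  replace (u k) with (step_term P t u x k)
    by (unfold step_term; repeat destruct excluded_middle_informative; tauto).
  apply is_series_ge_term; [apply step_term_ge0|apply f_series].
Qed.

Lemma step_ge0 x : 0 <= f x.
Proof.
  apply Rle_trans with (step_term P t u x 0);
    [apply step_term_ge0|apply is_series_ge_term; [apply step_term_ge0|apply f_series]].
Qed.

Lemma step_eq0 x : (forall k, P k -> x < t k) -> f x = 0.
Proof.
  intros no_jump.
  assert (H0 : is_series (step_term P t u x) (0 * f x)).
  { apply is_series_ext with (fun k => 0 * step_term P t u x k);
      [|exact (@is_series_scal_l R_AbsRing R_NormedModule 0 _ _ (f_series x))].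
    intros k; rewrite Rmult_0_l.
    unfold step_term; destruct excluded_middle_informative as [Pk|]; [|reflexivity].
    specialize (no_jump k Pk); destruct excluded_middle_informative; [lra|reflexivity]. }
  rewrite <- (is_series_unique _ _ (f_series x)), (is_series_unique _ _ H0); ring.
Qed.

Lemma step_const x y : x <= y -> (forall k, P k -> ~ (x < t k <= y)) -> f x = f y.
Proof.
  intros x_le_y no_jump.
  rewrite <- (is_series_unique _ _ (f_series x)), <- (is_series_unique _ _ (f_series y)).
  apply Series_ext; intros k; unfold step_term.
  destruct excluded_middle_informative as [Pk|]; [|reflexivity].
  specialize (no_jump k Pk).
  repeat destruct excluded_middle_informative; try reflexivity; exfalso; lra.
Qed.

Lemma step_lt x y k : P k -> x < t k <= y -> f x < f y.
Proof.
  intros Pk jump.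
  pose proof (is_series_minus _ _ _ _ (f_series y) (f_series x)) as Hdiff.
  unfold plus, opp in Hdiff; simpl in Hdiff.
  assert (u k <= f y + - f x).
  { replace (u k) with (step_term P t u y k + - step_term P t u x k)
      by (unfold step_term; repeat destruct excluded_middle_informative; try tauto; lra).
    apply (is_series_ge_term _ _) with (2 := Hdiff).
    intros n; unfold step_term; repeat destruct excluded_middle_informative; try lra.
    specialize (u_pos n); lra. }
  specialize (u_pos k); lra.
Qed.

End StepFunction.

Lemma le_kappa_0 a : le_kappa a 0.
Proof. intros j j_lt; lia. Qed.

Lemma le_kappa_S a k : le_kappa a k -> ~ in_I a (orb a k) -> le_kappa a (S k).
Proof.
  intros le_k not_I j j_lt.
  destruct (Nat.eq_dec j k) as [->|j_ne]; [exact not_I|apply le_k; lia].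
Qed.

Lemma orb_two_thirds_dyadic k : exists m : Z, orb (2/3) k * 2^k = 3 * IZR m.
Proof.
  induction k as [|k [m Hm]]; [exists 0%Z; simpl; lra|].
  assert (pow2 : 2^k = IZR (2^Z.of_nat k)) by (rewrite pow_IZR; reflexivity).
  change (orb (2/3) (S k)) with (T_a (2/3) (orb (2/3) k)).
  unfold T_a; destruct excluded_middle_informative.
  - exists (3*m + 2^Z.of_nat k)%Z; rewrite plus_IZR, mult_IZR, <- pow2; simpl; lra.
  - exists (3*m - 2^Z.of_nat k)%Z; rewrite minus_IZR, mult_IZR, <- pow2; simpl; lra.
Qed.

Lemma orb_two_thirds_neq1 k : orb (2/3) k <> 1.
Proof.
  intros orb_eq1; destruct (orb_two_thirds_dyadic k) as [m Hm].
  rewrite orb_eq1, Rmult_1_l, pow_IZR, <- mult_IZR in Hm; apply eq_IZR in Hm.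
  assert (three_dvd : (3 | 2^Z.of_nat k)%Z) by (exists m; lia).
  apply Zpow_facts.prime_power_prime in three_dvd; [lia|lia|apply prime_3|apply prime_2].
Qed.

Section Orbit.

Variable a : R.
Hypothesis a_range : 0 < a < 1.

Lemma T_a_lower z : 0 <= z < 1 -> z <= (2*a - 1)/(1 - a) -> T_a a z = (z + 1)/a.
Proof.
  intros; unfold T_a; destruct excluded_middle_informative; [reflexivity|tauto].
Qed.

Lemma T_a_upper z : 1 <= z -> T_a a z = (z - 1)/a.
Proof.
  intros; unfold T_a; destruct excluded_middle_informative; [lra|reflexivity].
Qed.

Lemma I_a_lower_end : (2*a - 1)/(1 - a) = a * (1/(1 - a)) - 1.
Proof. field; lra. Qed.

Lemma T_a_range z : 0 <= z <= 1/(1 - a) -> ~ in_I a z -> 0 <= T_a a z <= 1/(1 - a).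
Proof.
  intros z_range not_I.
  destruct (one_minus_inv_spec a ltac:(lra)) as [B_inv B_pos].
  destruct (Rlt_or_le z 1) as [z_lt1|z_ge1].
  - assert (z <= a * (1/(1 - a)) - 1)
      by (unfold in_I in not_I; rewrite I_a_lower_end in not_I; lra).
    rewrite T_a_lower; [|lra|rewrite I_a_lower_end; lra].
    split; [apply Rdiv_le_0_compat|apply Rle_div_l]; nra.
  - rewrite T_a_upper by lra.
    split; [apply Rdiv_le_0_compat|apply Rle_div_l]; nra.
Qed.

Lemma orb_range k : le_kappa a k -> 0 <= orb a k <= 1/(1 - a).
Proof.
  induction k as [|k IHk]; intros le_k.
  - pose proof (one_minus_inv_spec a ltac:(lra)); simpl; lra.
  - assert (le_k' : le_kappa a k) by (intros j j_lt; apply le_k; lia).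
    apply T_a_range; [now apply IHk|apply le_k; lia].
Qed.

Lemma orb_preimage k x y b :
  a <= 2/3 -> 0 <= x -> y <= 1/(1 - a) -> le_kappa a k ->
  a * x + sgn b < orb a k <= a * y + sgn b ->
  le_kappa a (S k) /\ x < orb a (S k) <= y.
Proof.
  intros a_le x_ge0 y_le le_k jump.
  change (orb a (S k)) with (T_a a (orb a k)).
  set (z := orb a k) in *.
  destruct (one_minus_inv_spec a ltac:(lra)) as [B_inv B_pos].
  destruct b; simpl in jump.
  - assert (not_I : ~ in_I a z) by (unfold in_I; nra).
    split; [now apply le_kappa_S|].
    rewrite T_a_upper by nra.
    split; [apply Rlt_div_r|apply Rle_div_l]; lra.
  - assert (z_le : z <= (2*a - 1)/(1 - a)) by (rewrite I_a_lower_end; nra).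
    assert (z_lt1 : z < 1).
    { destruct (Req_dec a (2/3)) as [a_eq|a_ne].
      - assert (z <> 1) by (unfold z; rewrite a_eq; apply orb_two_thirds_neq1).
        assert ((2*a - 1)/(1 - a) <= 1) by (apply Rle_div_l; lra).
        lra.
      - assert ((2*a - 1)/(1 - a) < 1) by (apply Rlt_div_l; lra).
        lra. }
    assert (not_I : ~ in_I a z) by (unfold in_I; lra).
    split; [now apply le_kappa_S|].
    assert (z_ge0 : 0 <= z) by apply (orb_range k le_k).
    rewrite T_a_lower by lra.
    split; [apply Rlt_div_r|apply Rle_div_l]; lra.
Qed.

End Orbit.

(* The chain killed at tau: -1 is a cemetery, so that f vanishes on it for f in U_+. *)
Definition stopped_step (a x : R) (b : bool) : R :=
  if excluded_middle_informative (0 <= x) then a * x + sgn b else -1.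

Lemma stopped_step_le a x b : 0 < a < 1 -> x <= 1/(1 - a) -> stopped_step a x b <= 1/(1 - a).
Proof.
  intros a_range x_le; pose proof (one_minus_inv_spec a ltac:(lra)).
  unfold stopped_step; destruct excluded_middle_informative; [destruct b; simpl|]; nra.
Qed.

Lemma X_le a x xi n : 0 < a < 1 -> x <= 1/(1 - a) -> X a x xi n <= 1/(1 - a).
Proof.
  intros a_range x_le; induction n as [|n IHn]; [exact x_le|].
  pose proof (one_minus_inv_spec a ltac:(lra)).
  simpl; destruct (xi n); simpl; nra.
Qed.

Lemma X_S_shift a x xi k :
  X a x xi (S k) = X a (a * x + sgn (xi 0%nat)) (fun j => xi (S j)) k.
Proof. induction k as [|k IHk]; [reflexivity|]. simpl in *; now rewrite IHk. Qed.

Lemma tau_gt_S_shift a x xi n :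
  tau_gt a x xi (S n) <-> 0 <= x /\ tau_gt a (a * x + sgn (xi 0%nat)) (fun j => xi (S j)) n.
Proof.
  split.
  - intros tau_gt_Sn; split; [apply (tau_gt_Sn 0%nat); lia|].
    intros k k_le; rewrite <- X_S_shift; apply tau_gt_Sn; lia.
  - intros [x_ge0 tau_gt_n] [|k] k_le; [exact x_ge0|].
    rewrite X_S_shift; apply tau_gt_n; lia.
Qed.

Lemma Y_S_shift a f x xi n :
  Y a f x xi (S n) = Y a f (stopped_step a x (xi 0%nat)) (fun j => xi (S j)) n.
Proof.
  unfold Y, stopped_step.
  destruct (excluded_middle_informative (0 <= x)) as [x_ge0|x_lt0].
  - rewrite X_S_shift.
    do 2 destruct excluded_middle_informative; try reflexivity; exfalso;
      rewrite tau_gt_S_shift in *; tauto.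
  - destruct excluded_middle_informative as [tau_gt_Sn|_].
    + exfalso; apply x_lt0, (tau_gt_Sn 0%nat); lia.
    + destruct excluded_middle_informative as [tau_gt_n|_]; [|reflexivity].
      specialize (tau_gt_n 0%nat (Nat.le_0_l _)); simpl in tau_gt_n; lra.
Qed.

Lemma Y_0 a f x xi : (forall z, z < 0 -> f z = 0) -> Y a f x xi 0 = f x.
Proof.
  intros f_neg; unfold Y; destruct excluded_middle_informative as [|not_tau]; [reflexivity|].
  destruct (Rle_dec 0 x) as [x_ge0|x_lt0].
  - exfalso; apply not_tau; intros k k_le; replace k with 0%nat by lia; exact x_ge0.
  - symmetry; apply f_neg; lra.
Qed.

Lemma Y_state a f x xi n : 0 < a < 1 -> x <= 1/(1 - a) -> state a f (Y a f x xi n).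
Proof.
  intros a_range x_le; unfold Y, state; destruct excluded_middle_informative as [tau_gt_n|];
    [right|now left].
  exists (X a x xi n); split; [split; [apply tau_gt_n; lia|apply X_le; lra]|reflexivity].
Qed.

Definition Ind (P : Prop) : R := if excluded_middle_informative P then 1 else 0.

Lemma Ind_iff (P Q : Prop) : (P <-> Q) -> Ind P = Ind Q.
Proof. intros; unfold Ind; repeat destruct excluded_middle_informative; tauto. Qed.

Lemma Ind_and (P Q : Prop) : Ind (P /\ Q) = Ind P * Ind Q.
Proof. unfold Ind; repeat destruct excluded_middle_informative; try ring; tauto. Qed.

Lemma sum_map_flat_map_bool (F : list bool -> R) (L : list (list bool)) :
  fold_right Rplus 0 (map F (flat_map (fun l => [true :: l; false :: l]) L)) =
  fold_right Rplus 0 (map (fun l => F (true :: l) + F (false :: l)) L).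
Proof. induction L as [|l L IHL]; simpl; [ring|]; rewrite IHL; ring. Qed.

Lemma sum_map_lin (c d : R) (F G : list bool -> R) (L : list (list bool)) :
  fold_right Rplus 0 (map (fun l => c * F l + d * G l) L) =
  c * fold_right Rplus 0 (map F L) + d * fold_right Rplus 0 (map G L).
Proof. induction L as [|l L IHL]; simpl; [ring|]; rewrite IHL; ring. Qed.

Fixpoint path_weight (K : R -> R -> R) (n : nat) (s : nat -> R) : R :=
  match n with
  | O => 1
  | S n => K (s 0%nat) (s 1%nat) * path_weight K n (fun j => s (S j))
  end.

Lemma path_weight_last K n s :
  path_weight K (S n) s = path_weight K n s * K (s n) (s (S n)).
Proof.
  revert s; induction n as [|n IHn]; intros s; [simpl; ring|].
  change (path_weight K (S (S n)) s)
    with (K (s 0%nat) (s 1%nat) * path_weight K (S n) (fun j => s (S j))).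
  rewrite IHn; simpl; ring.
Qed.

(* The transition law out of state v, read off from an arbitrary representative
   y with f y = v; lumpability (Uplus_stopped_step_compat) makes it independent
   of the choice. *)
Definition lumped_kernel (p a : R) (f : R -> R) (v w : R) : R :=
  let y := epsilon (inhabits 0) (fun y => y <= 1/(1 - a) /\ f y = v) in
  p * Ind (f (stopped_step a y true) = w) + (1 - p) * Ind (f (stopped_step a y false) = w).

Section FirstStep.

Variables (p a : R) (f : R -> R).
Hypothesis f_neg : forall z, z < 0 -> f z = 0.

Lemma Y_path_S_iff x xi n s :
  (forall k, (k <= S n)%nat -> Y a f x xi k = s k) <->
  f x = s 0%nat /\
  forall k, (k <= n)%nat ->
    Y a f (stopped_step a x (xi 0%nat)) (fun j => xi (S j)) k = s (S k).
Proof.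
  split.
  - intros path; split; [rewrite <- (Y_0 a f x xi f_neg); apply path; lia|].
    intros k k_le; rewrite <- Y_S_shift; apply path; lia.
  - intros [f_x path] [|k] k_le; [now rewrite Y_0|].
    rewrite Y_S_shift; apply path; lia.
Qed.

Lemma hist_prob_0 x s : hist_prob p a f x 0 s = Ind (f x = s 0%nat).
Proof.
  unfold hist_prob; simpl.
  change (if excluded_middle_informative ?P then 1 else 0) with (Ind P).
  rewrite (Ind_iff _ (f x = s 0%nat)); [ring|].
  split; [intros path; rewrite <- (Y_0 a f x (xi_of []) f_neg); apply path; lia|].
  intros f_x k k_le; replace k with 0%nat by lia; now rewrite Y_0.
Qed.

Lemma hist_prob_S x n s :
  hist_prob p a f x (S n) s =
  p * Ind (f x = s 0%nat) * hist_prob p a f (stopped_step a x true) n (fun j => s (S j)) +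
  (1 - p) * Ind (f x = s 0%nat) * hist_prob p a f (stopped_step a x false) n (fun j => s (S j)).
Proof.
  unfold hist_prob; simpl all_lists.
  rewrite sum_map_flat_map_bool, <- sum_map_lin; f_equal; apply map_ext; intros l.
  change (if excluded_middle_informative ?P then 1 else 0) with (Ind P).
  rewrite !(Ind_iff _ _ (Y_path_S_iff _ _ _ _)), !Ind_and; unfold xi_of; simpl; ring.
Qed.

End FirstStep.

Lemma exists_max_le (L : list R) (y : R) : (exists z, In z L /\ z <= y) ->
  exists z, In z L /\ z <= y /\ forall w, In w L -> w <= y -> w <= z.
Proof.
  induction L as [|h L IHL]; intros [z [z_in z_le]]; [destruct z_in|].
  destruct (classic (exists z, In z L /\ z <= y)) as [exL|no_L].
  - destruct (IHL exL) as (m & m_in & m_le & m_max).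
    destruct (Rle_dec h y) as [h_le|h_gt]; [destruct (Rle_dec h m) as [h_le_m|h_gt_m]|].
    + exists m; split; [now right|split; [exact m_le|]].
      intros w [<-|w_in] w_le; [exact h_le_m|now apply m_max].
    + exists h; split; [now left|split; [exact h_le|]].
      intros w [<-|w_in] w_le; [lra|specialize (m_max w w_in w_le); lra].
    + exists m; split; [now right|split; [exact m_le|]].
      intros w [<-|w_in] w_le; [lra|now apply m_max].
  - destruct z_in as [<-|z_in]; [|exfalso; apply no_L; now exists z].
    exists h; split; [now left|split; [exact z_le|]].
    intros w [<-|w_in] w_le; [lra|exfalso; apply no_L; now exists w].
Qed.

Section Uplus.

Variables (a : R) (u : nat -> R) (f : R -> R).
Hypothesis a_range : 0 < a <= 2/3.
Hypothesis u_pos : forall k, 0 < u k.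
Hypothesis f_series : forall x, is_series (step_term (le_kappa a) (orb a) u x) (f x).

Lemma Uplus_gt0 x : 0 <= x -> 0 < f x.
Proof.
  intros x_ge0; apply Rlt_le_trans with (u 0%nat); [apply u_pos|].
  apply (step_ge_jump _ _ _ _ u_pos f_series); [apply le_kappa_0|simpl; lra].
Qed.

Lemma Uplus_eq0 x : x < 0 -> f x = 0.
Proof.
  intros x_lt0; apply (step_eq0 _ _ _ _ f_series).
  intros k le_k; pose proof (orb_range a ltac:(lra) k le_k); lra.
Qed.

Lemma Uplus_affine_compat x y b : 0 <= x <= y -> y <= 1/(1 - a) -> f x = f y ->
  f (a * x + sgn b) = f (a * y + sgn b).
Proof.
  intros x_range y_le fx_eq.
  apply (step_const _ _ _ _ f_series); [destruct b; simpl; nra|].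
  intros k le_k jump.
  destruct (orb_preimage a ltac:(lra) k x y b ltac:(lra) ltac:(lra) y_le le_k jump)
    as [le_Sk jump'].
  pose proof (step_lt _ _ _ _ u_pos f_series x y (S k) le_Sk jump'); lra.
Qed.

Lemma Uplus_stopped_step_compat x y b : x <= 1/(1 - a) -> y <= 1/(1 - a) -> f x = f y ->
  f (stopped_step a x b) = f (stopped_step a y b).
Proof.
  intros x_le y_le fx_eq; unfold stopped_step.
  destruct excluded_middle_informative as [x_ge0|x_lt0];
    destruct excluded_middle_informative as [y_ge0|y_lt0].
  - destruct (Rle_dec x y).
    + apply Uplus_affine_compat; auto; lra.
    + symmetry; apply Uplus_affine_compat; auto; lra.
  - pose proof (Uplus_gt0 x x_ge0); rewrite (Uplus_eq0 y) in fx_eq; lra.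
  - pose proof (Uplus_gt0 y y_ge0); rewrite (Uplus_eq0 x) in fx_eq; lra.
  - reflexivity.
Qed.

Lemma hist_prob_product p x n s : x <= 1/(1 - a) ->
  hist_prob p a f x n s = Ind (f x = s 0%nat) * path_weight (lumped_kernel p a f) n s.
Proof.
  revert x s; induction n as [|n IHn]; intros x s x_le.
  - rewrite hist_prob_0 by exact Uplus_eq0; simpl; ring.
  - assert (step_le : forall b, stopped_step a x b <= 1/(1 - a))
      by (intros; apply stopped_step_le; lra).
    rewrite hist_prob_S, !IHn by (exact Uplus_eq0 || apply step_le).
    destruct (classic (f x = s 0%nat)) as [f_x|f_x];
      [|replace (Ind (f x = s 0%nat)) with 0
          by (unfold Ind; destruct excluded_middle_informative; tauto); ring].
    unfold lumped_kernel; simpl path_weight; set (y := epsilon _ _).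
    assert (y_spec : y <= 1/(1 - a) /\ f y = s 0%nat)
      by (apply epsilon_spec; now exists x).
    destruct y_spec as [y_le f_y].
    rewrite !(Uplus_stopped_step_compat y x) by (assumption || congruence).
    ring.
Qed.

Lemma Uplus_hom_markov p x : 0 < p < 1 -> x <= 1/(1 - a) -> is_hom_markov p a f x.
Proof.
  intros p_range x_le; exists (lumped_kernel p a f); split.
  - intros v w; unfold lumped_kernel, Ind.
    repeat destruct excluded_middle_informative; nra.
  - intros n s; rewrite !hist_prob_product, path_weight_last by exact x_le; ring.
Qed.

Lemma Y_ge0 x xi n : 0 <= Y a f x xi n.
Proof.
  unfold Y; destruct excluded_middle_informative; [|lra].
  exact (step_ge0 _ _ _ _ u_pos f_series _).
Qed.

Lemma tau_gt_iff_f_neq0 x xi n : 0 <= x ->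
  tau_gt a x xi n <-> forall k, (1 <= k <= n)%nat -> f (X a x xi k) <> 0.
Proof.
  intros x_ge0; split.
  - intros tau_gt_n k k_range.
    pose proof (Uplus_gt0 (X a x xi k) (tau_gt_n k ltac:(lia))); lra.
  - intros f_neq0 [|k] k_le; [exact x_ge0|].
    destruct (Rle_dec 0 (X a x xi (S k))) as [|X_lt0]; [assumption|].
    exfalso; apply (f_neq0 (S k)); [lia|apply Uplus_eq0; lra].
Qed.

Lemma Y_absorbing x xi n : Y a f x xi n = 0 -> Y a f x xi (S n) = 0.
Proof.
  unfold Y; intros Y_n.
  destruct (excluded_middle_informative (tau_gt a x xi (S n))) as [tau_gt_Sn|]; [|reflexivity].
  destruct excluded_middle_informative as [tau_gt_n|not_tau_gt_n].
  - pose proof (Uplus_gt0 _ (tau_gt_n n (le_n n))); lra.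
  - exfalso; apply not_tau_gt_n; intros k k_le; apply tau_gt_Sn; lia.
Qed.

Lemma Uplus_state_list m : kappa'_eq a m ->
  exists l : list R, NoDup l /\ length l = (m + 2)%nat /\
    (forall v, In v l <-> state a f v) /\ In 0 l.
Proof.
  intros [orbit [orbit_nodup [orbit_len orbit_spec]]].
  assert (orbit_range : forall z, In z orbit -> 0 <= z <= 1/(1 - a)).
  { intros z z_in; apply orbit_spec in z_in; destruct z_in as [k [le_k ->]].
    apply orb_range; [lra|exact le_k]. }
  assert (f_orbit : forall y, 0 <= y <= 1/(1 - a) -> In (f y) (map f orbit)).
  { intros y y_range.
    destruct (exists_max_le orbit y) as (z & z_in & z_le & z_max).
    { exists 0; split; [apply orbit_spec; exists 0%nat; split; [apply le_kappa_0|reflexivity]|lra]. }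
    replace (f y) with (f z); [now apply in_map|].
    apply (step_const _ _ _ _ f_series z y z_le).
    intros k le_k jump.
    assert (orb_in : In (orb a k) orbit) by (apply orbit_spec; now exists k).
    specialize (z_max _ orb_in (proj2 jump)); lra. }
  exists (0 :: map f orbit); split; [|split; [|split]].
  - constructor.
    + intros f_in; apply in_map_iff in f_in; destruct f_in as [z [f_z z_in]].
      pose proof (Uplus_gt0 z (proj1 (orbit_range z z_in))); lra.
    + apply NoDup_map_NoDup_ForallPairs; [|exact orbit_nodup].
      intros z1 z2 z1_in z2_in f_eq.
      destruct (proj1 (orbit_spec z1) z1_in) as [k1 [le_k1 ->]].
      destruct (proj1 (orbit_spec z2) z2_in) as [k2 [le_k2 ->]].
      destruct (Rtotal_order (orb a k1) (orb a k2)) as [lt|[eq|gt]]; [exfalso|exact eq|exfalso].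
      * pose proof (step_lt _ _ _ _ u_pos f_series _ _ k2 le_k2 (conj lt (Rle_refl _))); lra.
      * pose proof (step_lt _ _ _ _ u_pos f_series _ _ k1 le_k1 (conj gt (Rle_refl _))); lra.
  - simpl; rewrite length_map; lia.
  - intros v; split.
    + intros [<-|v_in]; [now left|right].
      apply in_map_iff in v_in; destruct v_in as [z [<- z_in]].
      exists z; split; [now apply orbit_range|reflexivity].
    + intros [->|[y [y_range ->]]]; [now left|right; now apply f_orbit].
  - now left.
Qed.

End Uplus.

Theorem corollary2p4 :
  forall (p a : R) (f : R -> R) (x : R),
    0 < p < 1 ->
    0 < a <= 2 / 3 ->
    in_Uplus a f ->
    0 <= x <= 1 / (1 - a) ->
    (* time-homogeneous non-negative Markov chain *)
    is_hom_markov p a f x /\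
    (forall xi n, 0 <= Y a f x xi n) /\
    (* tau = inf{n >= 1 : f(X_n) = 0} *)
    (forall xi n, tau_gt a x xi n <->
       (forall k, (1 <= k <= n)%nat -> f (X a x xi k) <> 0)) /\
    (* if varkappa'_a = m < oo: m+2 states, including the absorbing state 0 *)
    (forall m : nat, kappa'_eq a m ->
       exists l : list R,
         NoDup l /\ length l = (m + 2)%nat /\
         (forall v, In v l <-> state a f v) /\
         In 0 l /\
         (forall xi n, In (Y a f x xi n) l) /\
         (forall xi n, Y a f x xi n = 0 -> Y a f x xi (S n) = 0)).
Proof.
  intros p a f x p_range a_range [u [u_pos [_ f_series]]] x_range.
  split; [|split; [|split]].
  - now apply (Uplus_hom_markov a u f).
  - intros xi n; now apply (Y_ge0 a u f).
  - intros xi n; now apply (tau_gt_iff_f_neq0 a u f).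
  - intros m kappa'_m.
    destruct (Uplus_state_list a u f a_range u_pos f_series m kappa'_m)
      as (l & l_nodup & l_len & l_states & l_0).
    exists l; do 4 (split; [assumption|]); split.
    + intros xi n; apply l_states, Y_state; lra.
    + intros xi n; now apply (Y_absorbing a u f).
Qed.
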